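(* Let $a_1\in\mathbb{R}$, $0<\varepsilon<1$, $T=1+\varepsilon$, and $(y,x_0)\in M^2=\mathbb{R}\times L^2(-1,0)$. Put $\widetilde{x}(t)=y+a_1\int_0^t x_0(\tau-1)\,d\tau$ for $t\in[0,1]$. Then $\mathcal{U}_T(y,x_0)$ is exactly the set of functions $u\in L^2(0,T)$ of the form (almost everywhere) $$u(t)=\begin{cases} u_0(t), & t\in[0,\varepsilon),\\ -a_1x_0(t-1), & t\in[\varepsilon,1),\\ -a_1\Big(\widetilde{x}(t-1)+\int_0^{t-1}u_0(\tau)\,d\tau\Big), & t\in[1,1+\varepsilon),\end{cases}$$ where $u_0$ ranges over all functions in $L^2(0,\varepsilon)$ satisfying $\int_0^\varepsilon u_0(\tau)\,d\tau=-\widetilde{x}(\varepsilon)$.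
   Context: Consider the scalar retarded control equation $\dot x(t)=a_1x(t-1)+u(t)$, $t\ge0$, with control $u\in L^2_{loc}(0,\infty)$ and initial data $x(0)=y$, $x(t)=x_0(t)$ for $t\in[-1,0)$, where $(y,x_0)\in M^2=\mathbb{R}\times L^2(-1,0)$. For every such initial state and control there is a unique continuous solution $x(t)=x(t;y,x_0,u)$ on $[0,\infty)$ (absolutely continuous, satisfying the equation a.e.). For $T>1$, the set of admissible controls $\mathcal{U}_T(y,x_0)$ is the set of $u\in L^2(0,T)$ such that $x(t;y,x_0,u)=0$ for all $t\in[T-1,T]$. *)

From HB Require Import structures.
From mathcomp Require Import all_boot all_order all_algebra.
From mathcomp Require Import all_classical all_reals all_analysis.
Set Implicit Arguments. Unset Strict Implicit. Unset Printing Implicit Defensive.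
Import Order.TTheory GRing.Theory Num.Theory.
Import numFieldNormedType.Exports.
Local Open Scope classical_set_scope.
Local Open Scope ring_scope.

Definition LInt {R : realType} (a b : R) (f : R -> R) : R :=
  \int[@lebesgue_measure R]_(s in `[a, b]) f s.

Definition L2on {R : realType} (a b : R) (f : R -> R) : Prop :=
  measurable_fun `[a, b] f /\
  (\int[@lebesgue_measure R]_(s in `[a, b]) ((f s) ^+ 2)%:E < +oo)%E.

(* x is the solution on [0,T] of  x'(t) = a1 x(t-1) + u(t),  x(0) = y,
   x(t) = x0(t) on [-1,0), written in integrated form (x is continuous and
   x(t) = y + int_0^t (a1 x(s-1) + u(s)) ds), the delayed value x(s-1)
   being x0(s-1) for s < 1. *)
Definition is_solution {R : realType} (a1 y : R) (x0 u : R -> R) (T : R)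
    (x : R -> R) : Prop :=
  {within `[0, T], continuous x} /\
  forall t, 0 <= t <= T ->
    x t = y + LInt 0 t (fun s => a1 * (if s < 1 then x0 (s - 1) else x (s - 1)) + u s).

Definition admissible {R : realType} (a1 y : R) (x0 : R -> R) (T : R)
    (u : R -> R) : Prop :=
  L2on 0 T u /\
  exists x, is_solution a1 y x0 u T x /\ (forall t, T - 1 <= t <= T -> x t = 0).

Definition xtilde {R : realType} (a1 y : R) (x0 : R -> R) (t : R) : R :=
  y + a1 * LInt 0 t (fun tau => x0 (tau - 1)).

Definition ctrl {R : realType} (a1 y eps : R) (x0 u0 : R -> R) (t : R) : R :=
  if t < eps then u0 t
  else if t < 1 then - a1 * x0 (t - 1)
  else - a1 * (xtilde a1 y x0 (t - 1) + LInt 0 (t - 1) u0).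

Set Warnings "-notation-overridden,-ambiguous-paths,-notation-incompatible-prefix,-overwriting-delimiting-key".
From HB Require Import structures.
From mathcomp Require Import all_boot all_order all_algebra.
From mathcomp Require Import all_classical all_reals all_analysis.
From mathcomp Require Import measurable_realfun.
From mathcomp Require Import ring lra.
Import Order.TTheory GRing.Theory Num.Theory.
Import numFieldNormedType.Exports.
Local Open Scope classical_set_scope.
Local Open Scope ring_scope.

(* On [0,1] the delayed term only involves the datum x0, so on [0,eps] every
   solution is  x(t) = x~(t) + int_0^t u  (solution_head).
   Forward direction (steering_ctrl_form): take u0 := u.  Evaluating at eps
   gives  int_0^eps u0 = -x~(eps).  Since x(t) - x(eps) = int_eps^t of the
   right-hand side vanishes for t in [eps, 1+eps], the right-hand side
   vanishes a.e. on (eps, 1+eps) (Lebesgue differentiation,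
   ae_zero_of_LInt_zero); solving  a1 x(t-1) + u(t) = 0  for u(t) is the
   formula defining ctrl.
   Backward direction: the state is  y + int_0^t (a1 x0(s-1) + u(s)) 1_[0,eps]
   (steered_state).  It is continuous, agrees with x~ + int u0 on [0,eps],
   is frozen at x~(eps) + int_0^eps u0 = 0 after eps, and a.e. its integrand
   is the right-hand side of the equation along it, because u = ctrl a.e. *)

Section IntervalIntegrals.
Context {R : realType}.
Local Notation mu := (@lebesgue_measure R).
Implicit Types (a b c e r t : R) (f g : R -> R).

Lemma integrable_cst_itv a b (k : R) : mu.-integrable `[a, b] (EFin \o cst k).
Proof.
apply/integrableP; split; first exact/measurable_EFinP/measurable_cst.
rewrite (eq_integral (fun _ => `|k|%:E)); last by move=> ? _.
rewrite integral_cst//= lebesgue_measure_itv/=.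
by case: ifP => _; rewrite ?mule0 ?ltry.
Qed.

(* L^2(a,b) is contained in L^1(a,b), using |f| <= f^2 + 1. *)
Lemma L2on_integrable {a b f} : L2on a b f -> mu.-integrable `[a, b] (EFin \o f).
Proof.
move=> [mf If].
have mf2 : measurable_fun `[a, b] (fun s => f s ^+ 2) by exact: measurable_funX.
have i2 : mu.-integrable `[a, b] (EFin \o (fun s => f s ^+ 2)).
  apply/integrableP; split; first exact/measurable_EFinP.
  by under eq_integral do rewrite /= ger0_norm ?sqr_ge0//.
have i21 : mu.-integrable `[a, b] (EFin \o (fun s => f s ^+ 2 + 1)).
  have := @integrableD _ _ _ mu _ (measurable_itv `[a, b]) _ _ i2 (integrable_cst_itv a b 1).
  by apply: eq_integrable => // s _; rewrite /= -EFinD.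
apply: le_integrable i21 => //; first exact/measurable_EFinP.
move=> s _; rewrite /= lee_fin [leRHS]ger0_norm ?addr_ge0 ?sqr_ge0//.
rewrite -(real_normK (num_real (f s))); have := normr_ge0 (f s).
set n := `|f s|; nra.
Qed.

Lemma L2on_sub {a b} c e {f} : a <= c -> e <= b -> L2on a b f -> L2on c e f.
Proof.
move=> ac eb [mf If]; have sub : `[c, e] `<=` `[a, b].
  by apply: subset_itv; rewrite bnd_simp.
split; first exact: measurable_funS mf.
apply: le_lt_trans If; apply: ge0_subset_integral => //.
- exact/measurable_EFinP/measurable_funX.
- by move=> s _; rewrite lee_fin sqr_ge0.
Qed.

(* Lebesgue measure is invariant under translation by c; both measures
   agree on half-open intervals, which generate the Borel sets. *)
Lemma pushforward_shift (c : R) (A : set R) : measurable A ->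
  pushforward mu ((fun s => s - c) : R -> measurableTypeR R) A = mu A.
Proof.
have mshift : measurable_fun [set: R] ((fun s => s - c) : R -> measurableTypeR R).
  by apply: measurable_funD.
move=> mA; apply/esym/lebesgue_measure_unique; last exact: mA.
move=> _ [[p q]] _ <- /=.
change (mu `]p, q] = mu ((fun s : R => s - c) @^-1` `]p, q])).
have -> : (fun s : R => s - c) @^-1` `]p, q]%classic = `]p + c, q + c]%classic.
  by apply/seteqP; split => x /=; rewrite !in_itv/= ltrBrDr lerBlDr.
rewrite !lebesgue_measure_itv/= !lte_fin ltrD2r -!EFinD.
by congr (if _ then _ else _); congr EFin; ring.
Qed.

Lemma integrable_shift {a b} (c : R) {f} : mu.-integrable `[a, b] (EFin \o f) ->
  mu.-integrable `[a + c, b + c] (EFin \o (fun s => f (s - c))).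
Proof.
move=> /integrableP [mf fi].
have mshift : measurable_fun [set: R] ((fun s => s - c) : R -> measurableTypeR R).
  by apply: measurable_funD.
have preim : (fun s : R => s - c) @^-1` `[a, b]%classic = `[a + c, b + c]%classic.
  by apply/seteqP; split => x /=; rewrite !in_itv/= lerBrDr lerBlDr.
apply/integrableP; split.
  apply: (measurable_comp _ _ mf) => //.
  - by move=> _ [x + <-]; rewrite -preim.
  - by apply: measurable_funD.
apply: le_lt_trans fi; rewrite le_eqVlt; apply/orP; left; apply/eqP.
rewrite [RHS](eq_measure_integral (pushforward mu
    ((fun s => s - c) : R -> measurableTypeR R))); last first.
  by move=> A mA _; symmetry; apply: pushforward_shift.
by rewrite ge0_integral_pushforward// ?preim//; exact: measurableT_comp.
Qed.

Lemma integrable_setU (A B : set R) (F : R -> \bar R) :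
  measurable A -> measurable B -> [disjoint A & B] ->
  mu.-integrable A F -> mu.-integrable B F -> mu.-integrable (A `|` B) F.
Proof.
move=> mA mB AB /integrableP[mfA iA] /integrableP[mfB iB].
have mF : measurable_fun (A `|` B) F by exact/measurable_funU.
apply/integrableP; split => //.
rewrite ge0_integral_setU //; first exact: lte_add_pinfty.
exact: measurableT_comp.
Qed.

Lemma LInt_split {a c b f} : a <= c -> c <= b ->
  mu.-integrable `[a, b] (EFin \o f) -> LInt a b f = LInt a c f + LInt c b f.
Proof.
move=> ac cb intf.
have := @Rintegral_itvB R f (BLeft a) (BRight b) c intf.
rewrite !bnd_simp => /(_ ac cb) diff.
rewrite /LInt -(@Rintegral_itv_obnd_cbnd R c (BRight b)); last first.
  by apply: integrableS intf => //; apply: subset_itvr; rewrite bnd_simp.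
by rewrite -diff addrC subrK.
Qed.

Lemma LInt_ae_eq {a b f g} :
  measurable_fun `[a, b] f -> measurable_fun `[a, b] g ->
  {ae mu, forall x, a <= x <= b -> f x = g x} -> LInt a b f = LInt a b g.
Proof.
move=> mf mg fg; rewrite /LInt /Rintegral; congr fine.
apply: ae_eq_integral => //; try exact/measurable_EFinP.
apply: filterS fg; first exact: (ae_filter_ringOfSetsType mu).
by move=> x fgx; rewrite /= in_itv/= => /fgx ->.
Qed.

Lemma integrable_measurable_sub {a b c e f} : a <= c -> e <= b ->
  mu.-integrable `[a, b] (EFin \o f) -> measurable_fun `[c, e] f.
Proof.
move=> ac eb intf; apply/measurable_EFinP; apply: (measurable_int mu).
by apply: integrableS intf => //; apply: subset_itv; rewrite bnd_simp.
Qed.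

Lemma ae_neq c : {ae mu, forall x, x != c}.
Proof.
exists [set c]; split => //; first exact: lebesgue_measure_set1.
by move=> x /= /negP; rewrite negbK => /eqP.
Qed.

Lemma LInt_norm_le b t (K : R -> R) : 0 <= t <= b ->
  mu.-integrable `[0, b] (EFin \o K) ->
  `|LInt 0 t K| <= LInt 0 b (fun s => `|K s|).
Proof.
move=> /andP[t0 tb] iK.
have iKn : mu.-integrable `[0, b] (EFin \o (fun s => `|K s|)).
  by have := integrable_abse iK; apply: eq_integrable.
apply: (le_trans (le_normr_Rintegral _ _)) => //.
  by apply: integrableS iK => //; apply: subset_itvl; rewrite bnd_simp.
rewrite [leRHS](LInt_split t0 tb iKn) lerDl.
by apply: Rintegral_ge0 => s _.
Qed.

(* A function whose primitive vanishes identically on [a,b] vanishes a.e.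
   on (a,b): consequence of the Lebesgue differentiation theorem (FTC1). *)
Lemma ae_zero_of_LInt_zero a b h : mu.-integrable `[a, b] (EFin \o h) ->
  (forall t, a <= t <= b -> LInt a t h = 0) ->
  {ae mu, forall x, a < x < b -> h x = 0}.
Proof.
move=> inth prim0; pose f := h \_ `[a, b].
have intT : mu.-integrable setT (EFin \o f).
  by have := inth; rewrite integrable_mkcond // restrict_EFin.
have intf y : mu.-integrable [set` Interval (BRight a) (BRight y)] (EFin \o f).
  exact: integrableS intT.
have := FTC1 intf (integrable_locally (measurable_itv _) inth).
apply: filterS; first exact: (ae_filter_ringOfSetsType mu).
move=> x Hx /andP[ax xb]; have [_ dx] := Hx (ax : (BRight a < BRight x)%O).
have xab : x \in `]a, b[ by rewrite in_itv/= ax xb.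
rewrite /f patchE mem_set in dx; last by rewrite /= in_itv/= (ltW ax) (ltW xb).
rewrite -dx derive1E (@near_eq_derive _ _ _ _ (cst 0)) ?derive_cst//.
near=> z.
have : z \in `]a, b[ by near: z; exact: near_in_itvoo.
rewrite in_itv/= => /andP[az zb].
have sub : `]a, z]%classic `<=` `[a, b]%classic.
  by apply: subset_itv; rewrite bnd_simp// ltW.
rewrite (@eq_Rintegral _ _ _ _ _ h); last first.
  by move=> s /[!inE] saz; rewrite patchE mem_set//; exact: sub.
rewrite Rintegral_itv_obnd_cbnd; last exact: integrableS inth.
by rewrite -/(LInt a z h) prim0// (ltW az) (ltW zb).
Unshelve. all: by end_near.
Qed.

Lemma LInt_patch_in a e r f : a <= r <= e -> LInt a r (f \_ `[a, e]) = LInt a r f.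
Proof.
move=> /andP[ar re]; apply: eq_Rintegral => s; rewrite inE/= in_itv/=.
by move=> /andP[sa sr]; rewrite patchE mem_set//= in_itv/= sa (le_trans sr re).
Qed.

Lemma LInt_patch_out a e r f : a <= e -> e <= r ->
  mu.-integrable `[a, e] (EFin \o f) -> LInt a r (f \_ `[a, e]) = LInt a e f.
Proof.
move=> le_ae le_er intf.
have intp : mu.-integrable `[a, r] (EFin \o f \_ `[a, e]).
  have := intf; rewrite integrable_mkcond // restrict_EFin.
  by move=> /integrableS; apply.
have := @Rintegral_itvB R (f \_ `[a, e]) (BLeft a) (BRight r) e intp.
rewrite !bnd_simp => /(_ le_ae le_er).
have -> : \int[mu]_(s in `]e, r]) (f \_ `[a, e]) s = \int[mu]_(s in `]e, r]) 0.
  apply: eq_Rintegral => s; rewrite inE/= in_itv/= => /andP[es _].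
  rewrite patchE ifF//; apply/negbTE; rewrite notin_setE/= in_itv/= => /andP[_ se].
  by move: es; rewrite ltNge se.
rewrite Rintegral_cst// mul0r => /eqP; rewrite subr_eq0 => /eqP.
move=> same_integral; rewrite /LInt same_integral; apply: LInt_patch_in.
by rewrite le_ae lexx.
Qed.

End IntervalIntegrals.

Definition delay_rhs {R : realType} (a1 : R) (x0 x u : R -> R) (s : R) : R :=
  a1 * (if s < 1 then x0 (s - 1) else x (s - 1)) + u s.

Section DelayEquation.
Context {R : realType}.
Local Notation mu := (@lebesgue_measure R).
Context {a1 y : R} {x0 : R -> R}.
Hypothesis ix0 : mu.-integrable `[-1, 0] (EFin \o x0).

Lemma integrable_delayed_datum (D : set R) : measurable D -> D `<=` `[0, 1] ->
  mu.-integrable D (EFin \o (fun s => x0 (s - 1))).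
Proof.
move=> mD D01; have := integrable_shift 1 ix0; rewrite addNr add0r.
exact: integrableS.
Qed.

Lemma integrable_datum_rhs (u : R -> R) (r : R) : r <= 1 ->
  mu.-integrable `[0, r] (EFin \o u) ->
  mu.-integrable `[0, r] (EFin \o (fun s => a1 * x0 (s - 1) + u s)).
Proof.
move=> r1 iu.
have ix : mu.-integrable `[0, r] (EFin \o (fun s => x0 (s - 1))).
  by apply: integrable_delayed_datum => //; apply: subset_itvl; rewrite bnd_simp.
have := integrableD _ (integrableZl _ a1 ix) iu.
move=> /(_ (measurable_itv _) (measurable_itv _)).
by apply: eq_integrable => // s _.
Qed.

Lemma LInt_datum_rhs (u : R -> R) (r : R) : 0 <= r <= 1 ->
  mu.-integrable `[0, r] (EFin \o u) ->
  y + LInt 0 r (fun s => a1 * x0 (s - 1) + u s) = xtilde a1 y x0 r + LInt 0 r u.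
Proof.
move=> /andP[r0 r1] iu.
have ix : mu.-integrable `[0, r] (EFin \o (fun s => x0 (s - 1))).
  by apply: integrable_delayed_datum => //; apply: subset_itvl; rewrite bnd_simp.
rewrite /LInt RintegralD //; last first.
  have := integrableZl _ a1 ix => /(_ (measurable_itv _)).
  by apply: eq_integrable => // s _.
by rewrite RintegralZl // /xtilde /LInt addrA.
Qed.

(* The right-hand side is integrable on [0, 1+eps] as soon as u is and the
   state is, on [0,eps], y plus the primitive of an integrable K: on [0,1)
   the delayed term is the shifted datum, on [1, 1+eps] it is the bounded
   measurable function  y + int_0^(s-1) K. *)
Lemma delay_rhs_integrable {eps : R} {x u K : R -> R} : 0 < eps ->
  mu.-integrable `[0, 1 + eps] (EFin \o u) ->
  mu.-integrable `[0, eps] (EFin \o K) ->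
  (forall t, 0 <= t <= eps -> x t = y + LInt 0 t K) ->
  mu.-integrable `[0, 1 + eps] (EFin \o delay_rhs a1 x0 x u).
Proof.
move=> e0 iu iK xK.
pose p s := if s < 1 then x0 (s - 1) else x (s - 1).
suff ip : mu.-integrable `[0, 1 + eps] (EFin \o p).
  have := integrableD _ (integrableZl _ a1 ip) iu.
  move=> /(_ (measurable_itv _) (measurable_itv _)).
  by apply: eq_integrable => // s _.
have -> : `[0, 1 + eps]%classic = `[0, 1[%classic `|` `[1, 1 + eps]%classic :> set R.
  apply/seteqP; split => s /=; rewrite !in_itv/=.
    by move=> /andP[s0 se]; have [s1|s1] := ltP s 1; [left|right]; rewrite ?s0 ?se.
  by move=> [] /andP[s0 s1]; apply/andP; split; lra.
apply: integrable_setU => //.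
- apply/eqP/seteqP; split => s //=; rewrite !in_itv/=.
  by move=> [] /andP[_ s1] /andP[s1' _]; lra.
- have : mu.-integrable `[0, 1[ (EFin \o (fun s => x0 (s - 1))).
    by apply: integrable_delayed_datum => //; apply: subset_itvl; rewrite bnd_simp.
  apply: eq_integrable => // s; rewrite inE/= in_itv/= => /andP[_ s1].
  by rewrite /p /= s1.
- pose B := LInt 0 eps (fun s => `|K s|).
  have primK : measurable_fun `[0, eps] (fun t => LInt 0 t K).
    apply: subspace_continuous_measurable_fun => //.
    exact: parameterized_integral_continuous (ltW e0) iK.
  have : mu.-integrable `[1, 1 + eps] (EFin \o (fun s => y + LInt 0 (s - 1) K)).
    apply: measurable_bounded_integrable => //.
    + exact/compact_finite_measure/segment_compact.
    + apply: measurable_funD => //.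
      apply: (measurable_comp (measurable_itv `[0, eps]) _ primK).
        move=> _ [s /= + <-]; rewrite !in_itv/= => /andP[s1 se].
        by apply/andP; split; lra.
      by apply: measurable_funD.
    + exists (`|y| + B); split; first exact: num_real.
      move=> M BM s; rewrite /= in_itv/= => /andP[s1 se].
      apply/ltW/(le_lt_trans _ BM)/(le_trans (ler_normD _ _)); rewrite lerD2l.
      by apply: LInt_norm_le iK; apply/andP; split; lra.
  apply: eq_integrable => // s; rewrite inE/= in_itv/= => /andP[s1 se].
  by rewrite /p /= ltNge s1 /= xK//; apply/andP; split; lra.
Qed.
End DelayEquation.

Definition steered_state {R : realType} (a1 y eps : R) (x0 u : R -> R) (t : R) : R :=
  y + LInt 0 t ((fun s => a1 * x0 (s - 1) + u s) \_ `[0, eps]).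

Section Control.
Context {R : realType}.
Local Notation mu := (@lebesgue_measure R).
Context {a1 y eps : R} {x0 u : R -> R}.
Hypotheses (heps0 : 0 < eps) (heps1 : eps < 1).
Hypothesis ix0 : mu.-integrable `[-1, 0] (EFin \o x0).
Hypothesis iu : mu.-integrable `[0, 1 + eps] (EFin \o u).

Let G s := a1 * x0 (s - 1) + u s.

Let iu_sub r : r <= 1 + eps -> mu.-integrable `[0, r] (EFin \o u).
Proof. by move=> rT; apply: integrableS iu => //; apply: subset_itvl. Qed.

Let iG : mu.-integrable `[0, eps] (EFin \o G).
Proof.
apply: integrable_datum_rhs => //; first exact: ltW.
by apply: iu_sub; rewrite lerDr ltW.
Qed.

Lemma solution_head_primitive {x} : is_solution a1 y x0 u (1 + eps) x ->
  forall t, 0 <= t <= eps -> x t = y + LInt 0 t G.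
Proof.
move=> [_ xsol] t /andP[t0 te]; have e1 := heps1.
rewrite xsol; last by apply/andP; split; lra.
congr (_ + _); apply: eq_Rintegral => s; rewrite inE/= in_itv/= => /andP[_ st].
by rewrite ifT//; lra.
Qed.

Lemma solution_head {x} : is_solution a1 y x0 u (1 + eps) x ->
  forall t, 0 <= t <= eps -> x t = xtilde a1 y x0 t + LInt 0 t u.
Proof.
move=> sol t /andP[t0 te]; rewrite (solution_head_primitive sol); last first.
  by rewrite t0 te.
have e1 := heps1; apply: LInt_datum_rhs => //; first by apply/andP; split; lra.
by apply: iu_sub; lra.
Qed.

(* A solution that vanishes on [eps, 1+eps] has a right-hand side vanishing
   a.e. on (eps, 1+eps), since its primitive is constant there. *)
Lemma steered_rhs_ae_zero {x} : is_solution a1 y x0 u (1 + eps) x ->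
  (forall t, eps <= t <= 1 + eps -> x t = 0) ->
  {ae mu, forall s, eps < s < 1 + eps -> delay_rhs a1 x0 x u s = 0}.
Proof.
move=> sol xz; have [_ xsol] := sol; have e0 := heps0.
have ih : mu.-integrable `[0, 1 + eps] (EFin \o delay_rhs a1 x0 x u).
  exact: (delay_rhs_integrable ix0 heps0 iu iG (solution_head_primitive sol)).
apply: ae_zero_of_LInt_zero.
  by apply: integrableS ih => //; apply: subset_itvr; rewrite bnd_simp; lra.
move=> t /andP[et tT].
have iht : mu.-integrable `[0, t] (EFin \o delay_rhs a1 x0 x u).
  by apply: integrableS ih => //; apply: subset_itvl; rewrite bnd_simp.
have := LInt_split (ltW heps0) et iht.
have xt : x t = y + LInt 0 t (delay_rhs a1 x0 x u) by apply: xsol; lra.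
have xe : x eps = y + LInt 0 eps (delay_rhs a1 x0 x u) by apply: xsol; lra.
rewrite xz in xt; last by rewrite et tT.
rewrite xz in xe; last by rewrite lexx/=; lra.
lra.
Qed.

Lemma steering_ctrl_form {x} : is_solution a1 y x0 u (1 + eps) x ->
  (forall t, eps <= t <= 1 + eps -> x t = 0) ->
  LInt 0 eps u = - xtilde a1 y x0 eps /\
  {ae mu, forall t, t \in `[0, 1 + eps] -> u t = ctrl a1 y eps x0 u t}.
Proof.
move=> sol xz; have e0 := heps0; have e1 := heps1; split.
  have xe : x eps = xtilde a1 y x0 eps + LInt 0 eps u.
    by apply: (solution_head sol); rewrite lexx andbT ltW.
  by rewrite xz in xe; [lra | rewrite lexx; lra].
apply: (filterS3 (ae_filter_ringOfSetsType mu) _ (steered_rhs_ae_zero sol xz)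
  (ae_neq eps) (ae_neq (1 + eps))).
move=> t rhs0 te tT; rewrite in_itv/= => /andP[t0 tT']; rewrite /ctrl.
case: ltP => [//|et].
have /rhs0 : eps < t < 1 + eps by rewrite !lt_neqAle eq_sym te tT et tT'.
rewrite /delay_rhs; case: ltP => t1 /eqP; rewrite addrC addr_eq0 => /eqP ->.
  by rewrite mulNr.
by rewrite (solution_head sol); [ring | apply/andP; split; lra].
Qed.

Section SteeredState.
Variable u0 : R -> R.
Hypothesis iu0 : mu.-integrable `[0, eps] (EFin \o u0).
Hypothesis u0_constraint : LInt 0 eps u0 = - xtilde a1 y x0 eps.
Hypothesis u_ctrl :
  {ae mu, forall t, t \in `[0, 1 + eps] -> u t = ctrl a1 y eps x0 u0 t}.

Let x := steered_state a1 y eps x0 u.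

Lemma LInt_ctrl_head r : 0 <= r <= eps -> LInt 0 r u = LInt 0 r u0.
Proof.
move=> /andP[r0 re]; have e1 := heps1.
apply: LInt_ae_eq.
- by apply: (integrable_measurable_sub (lexx 0) _ iu); lra.
- exact: integrable_measurable_sub (lexx 0) re iu0.
apply: (filterS2 (ae_filter_ringOfSetsType mu) _ u_ctrl (ae_neq eps)).
move=> s us se /andP[s0 sr].
rewrite us; last by rewrite in_itv/= s0/=; lra.
by rewrite /ctrl ifT// lt_neqAle se/=; lra.
Qed.

Lemma steered_state_head r : 0 <= r <= eps -> x r = xtilde a1 y x0 r + LInt 0 r u0.
Proof.
move=> /andP[r0 re]; have e1 := heps1.
rewrite /x /steered_state LInt_patch_in ?r0//.
rewrite -LInt_ctrl_head ?r0//; apply: LInt_datum_rhs => //.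
  by apply/andP; split; lra.
by apply: iu_sub; lra.
Qed.

Lemma steered_state_tail t : eps <= t -> x t = 0.
Proof.
move=> et; have e0 := heps0.
have <- : x eps = 0.
  by rewrite steered_state_head ?lexx ?(ltW e0) ?u0_constraint ?addrN.
rewrite /x /steered_state [in LHS]LInt_patch_out ?(ltW e0)//.
by rewrite [in RHS]LInt_patch_in// lexx (ltW e0).
Qed.

(* Wherever u = ctrl, the cut-off integrand of the candidate state is the
   right-hand side of the delay equation evaluated along that state: after
   eps, ctrl exactly cancels the delayed term. *)
Lemma steered_integrand s : 0 <= s <= 1 + eps ->
  u s = ctrl a1 y eps x0 u0 s -> (G \_ `[0, eps]) s = delay_rhs a1 x0 x u s.
Proof.
move=> /andP[s0 sT] us; have e1 := heps1; rewrite patchE /delay_rhs.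
case: ifPn => [|sNe].
  by rewrite inE/= in_itv/= s0/= => se; rewrite ifT//; lra.
have es : eps < s by move: sNe; rewrite notin_setE/= in_itv/= s0/= => /negP; rewrite -ltNge.
rewrite us /ctrl; have -> : (s < eps) = false by apply/negbTE; rewrite -leNgt ltW.
case: ltP => s1; first by rewrite /point/=; ring.
rewrite steered_state_head; first by rewrite /point/=; ring.
by apply/andP; split; lra.
Qed.

Lemma steered_state_solution : is_solution a1 y x0 u (1 + eps) x.
Proof.
have e0 := heps0; have T0 : 0 <= 1 + eps by lra.
have iGc : mu.-integrable `[0, 1 + eps] (EFin \o G \_ `[0, eps]).
  have := iG; rewrite integrable_mkcond // restrict_EFin.
  by move=> /integrableS; apply.
have irhs : mu.-integrable `[0, 1 + eps] (EFin \o delay_rhs a1 x0 x u).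
  apply: (delay_rhs_integrable ix0 heps0 iu iG) => t /andP[t0 te].
  by rewrite /x /steered_state LInt_patch_in ?t0.
split.
  have := parameterized_integral_continuous T0 iGc.
  by move=> primc t; apply: cvgD; [exact: cvg_cst | exact: primc].
move=> t /andP[t0 tT]; rewrite /x {1}/steered_state; congr (y + _).
apply: LInt_ae_eq.
- exact: integrable_measurable_sub (lexx 0) tT iGc.
- exact: integrable_measurable_sub (lexx 0) tT irhs.
apply: filterS u_ctrl; first exact: (ae_filter_ringOfSetsType mu).
move=> s us /andP[s0 st]; apply: steered_integrand; last first.
  by apply: us; rewrite in_itv/= s0 (le_trans st tT).
by rewrite s0 (le_trans st tT).
Qed.

End SteeredState.
End Control.

Theorem mainTheorem1 (R : realType) (a1 eps y : R) (x0 : R -> R)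
  (heps0 : 0 < eps) (heps1 : eps < 1) (hx0 : L2on (-1) 0 x0) (u : R -> R) :
  admissible a1 y x0 (1 + eps) u <->
  (L2on 0 (1 + eps) u /\
   exists u0 : R -> R,
     [/\ L2on 0 eps u0,
         LInt 0 eps u0 = - xtilde a1 y x0 eps &
         {ae @lebesgue_measure R, forall t,
            t \in `[0, 1 + eps] -> u t = ctrl a1 y eps x0 u0 t}]).
Proof.
have ix0 := L2on_integrable hx0.
have T1 : 1 + eps - 1 = eps by rewrite addrAC subrr add0r.
split.
- move=> [Lu [x [sol]]]; rewrite T1 => x_zero; split => //; exists u.
  have [constraint u_ctrl] :=
    steering_ctrl_form heps0 heps1 ix0 (L2on_integrable Lu) sol x_zero.
  split => //; apply: (L2on_sub 0 eps (lexx 0) _ Lu).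
  by rewrite lerDr ltW.
- move=> [Lu [u0 [Lu0 constraint u_ctrl]]]; split => //.
  have iu := L2on_integrable Lu; have iu0 := L2on_integrable Lu0.
  exists (steered_state a1 y eps x0 u); split.
    exact: steered_state_solution heps0 heps1 ix0 iu u0 iu0 u_ctrl.
  rewrite T1 => t /andP[et _].
  exact: steered_state_tail heps0 heps1 ix0 iu u0 iu0 constraint u_ctrl t et.
Qed.
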